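(* Let $T$ be a Cartesian tree with root $i$, left subtree $A$ and right subtree $B$. If $A$ is nonempty then $|ng(T,i-1)|=lbl(B)+1$, and if $B$ is nonempty then $|ng(T,i)|=lbr(A)+1$.
   Context: Sequences are finite sequences of pairwise distinct integers indexed from $1$. The Cartesian tree $C(x)$ of a sequence $x$ of length $n$ is empty if $n=0$; otherwise, if $x[i]$ is the minimum of $x$, it is the binary tree with root $i$ (nodes labelled by positions), left subtree $C(x[1\ldots i-1])$ and right subtree $C(x[i+1\ldots n])$. For $1\le i\le n-1$, $\tau(x,i)$ is obtained from $x$ by exchanging $x[i]$ and $x[i+1]$. For a Cartesian tree $T$ with $n$ nodes and $1\le i\le n-1$, $ng(T,i)=\{C(\tau(x,i)) : x \text{ a sequence with } C(x)=T\}$. For a binary tree $T$, $lbl(T)=0$ if $T$ is empty and $lbl(T)=1+lbl(A)$ where $A$ is the left subtree of $T$ otherwise (number of nodes on the left branch); $lbr$ is defined symmetrically with right subtrees. *)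

From Stdlib Require List.
From mathcomp Require Import all_boot all_order all_algebra.
Set Implicit Arguments. Unset Strict Implicit. Unset Printing Implicit Defensive.
Import Order.TTheory GRing.Theory Num.Theory.
Local Open Scope ring_scope.

(* Binary trees whose nodes carry a label (a position, 1-indexed). *)
Inductive btree := Leaf | Node of btree & nat & btree.

Definition seqmin (x : int) (s : seq int) : int :=
  foldr (fun a b => if a < b then a else b) x s.

(* Cartesian tree with labels offset by k (positions k+1 .. k+n); fuel f >= size *)
Fixpoint cart_aux (f : nat) (k : nat) (x : seq int) : btree :=
  match f with
  | 0%N => Leaf
  | f'.+1 =>
    match x with
    | [::] => Leaf
    | a :: s =>
      let m := index (seqmin a s) x in
      Node (cart_aux f' k (take m x)) (k + m.+1)%N
           (cart_aux f' (k + m.+1)%N (drop m.+1 x))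
    end
  end.

Definition cart (x : seq int) : btree := cart_aux (size x) 0 x.

(* tau(x,i): exchange x[i] and x[i+1] (1-indexed) *)
Definition tau (x : seq int) (i : nat) : seq int :=
  set_nth 0 (set_nth 0 x i.-1 (nth 0 x i)) i (nth 0 x i.-1).

Fixpoint tsize (t : btree) : nat :=
  match t with Leaf => 0 | Node a _ b => (tsize a + tsize b).+1 end.

Definition ng (T : btree) (i : nat) (T' : btree) : Prop :=
  exists x : seq int, uniq x /\ cart x = T /\ T' = cart (tau x i).

Fixpoint lbl (t : btree) : nat :=
  match t with Leaf => 0 | Node a _ _ => (lbl a).+1 end.
Fixpoint lbr (t : btree) : nat :=
  match t with Leaf => 0 | Node _ _ b => (lbr b).+1 end.

Definition card_is (P : btree -> Prop) (k : nat) : Prop :=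
  exists l : list btree, Stdlib.Lists.List.NoDup l /\ (forall t, Stdlib.Lists.List.In t l <-> P t)
                         /\ Stdlib.Lists.List.length l = k.

From Pilot Require Import Defs.
From mathcomp Require Import all_boot all_order all_algebra zify.

(* Write x = l ++ m :: r, with the minimum m at the root position i.  Exchanging
   m with the last entry p of l keeps m at the root, now at position i - 1; its
   left subtree is C(l) without its rightmost node, and its right subtree is
   C(p :: r), i.e. B with one new node inserted on its left branch, at a depth
   d <= lbl B fixed by the rank of p among the left-branch values of r.
   Conversely every such d occurs: the Cartesian tree only sees the relative
   order inside l and inside r, so r may be replaced by an order-isomorphic
   sequence realizing the insertion (every inorder-labelled tree is the
   Cartesian tree of its preorder ranks), glued to l at the value p.  Distinct
   depths give distinct trees, so |ng(T, i-1)| = lbl B + 1.  Reversing x mirrors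
   the Cartesian tree, which turns the second claim into the first. *)

Set Implicit Arguments.
Unset Strict Implicit.
Unset Printing Implicit Defensive.

Import Order.TTheory Num.Theory.

(** * Cartesian trees of sequences of distinct integers *)

Definition cart_off (k : nat) (x : seq int) : btree := cart_aux (size x) k x.

Lemma cartE x : cart x = cart_off 0 x.
Proof. by []. Qed.

Lemma seqmin_mem a s : seqmin a s \in a :: s.
Proof.
elim: s => [|b s IH] /=; first by rewrite inE.
case: ifP => _; first by rewrite !inE eqxx orbT.
by move: IH; rewrite !inE => /orP [->|->]; rewrite ?orbT.
Qed.

Lemma seqmin_le a s y : y \in a :: s -> (seqmin a s <= y)%R.
Proof.
elim: s y => [|b s IH] y /=; first by rewrite inE => /eqP ->.
rewrite !inE => /or3P [/eqP->|/eqP->|ys].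
- by have := IH a (mem_head a s); case: ifP; lia.
- by case: ifP; lia.
- by have := IH y; rewrite inE ys orbT => /(_ isT); case: ifP; lia.
Qed.

Lemma cart_auxS f k a s (m := index (seqmin a s) (a :: s)) :
  cart_aux f.+1 k (a :: s) =
  Node (cart_aux f k (take m (a :: s))) (k + m.+1) (cart_aux f (k + m.+1) (drop m.+1 (a :: s))).
Proof. by []. Qed.

Lemma cart_aux_fuel f f' k x : size x <= f -> size x <= f' ->
  cart_aux f k x = cart_aux f' k x.
Proof.
elim: f f' k x => [|f IH] [|f'] k [|a s] // hf hf'.
rewrite !cart_auxS; have := seqmin_mem a s; rewrite -index_mem.
move: (index _ _) hf hf' => m /= hf hf' hm.
by congr Node; apply: IH; rewrite ?size_take ?size_drop //=; try case: ifP => ?; lia.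
Qed.

Lemma cart_auxE f k x : size x <= f -> cart_aux f k x = cart_off k x.
Proof. by move=> hf; apply: cart_aux_fuel. Qed.

Lemma cart_off_split k (l : seq int) (m : int) (r : seq int) :
  {in l ++ r, forall y, (m < y)%R} ->
  cart_off k (l ++ m :: r) = Node (cart_off k l) (k + size l).+1 (cart_off (k + size l).+1 r).
Proof.
move=> m_min; have m_l : m \notin l.
  by apply/negP => ml; have := m_min m; rewrite mem_cat ml ltxx => /(_ isT).
have [a [s ex]] : exists a s, l ++ m :: r = a :: s by case: (l); do 2 eexists.
have min_m : seqmin a s = m.
  apply/le_anti/andP; split; first by apply: seqmin_le; rewrite -ex mem_cat mem_head orbT.
  have := seqmin_mem a s; rewrite -ex mem_cat inE orbCA => /orP [/eqP -> //|].
  by rewrite -mem_cat => /m_min/ltW.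
have hs : size (l ++ m :: r) = (size s).+1 by rewrite ex.
rewrite /cart_off hs ex cart_auxS /m min_m -ex index_cat (negbTE m_l).
have -> : index m (m :: r) = 0 by rewrite /= eqxx.
rewrite addn0 addnS take_size_cat // -cat_rcons drop_size_cat ?size_rcons //.
rewrite size_cat /= in hs.
by congr Node; apply: cart_auxE; lia.
Qed.

Lemma cart_off_single k (p : int) : cart_off k [:: p] = Node Leaf k.+1 Leaf.
Proof. by have := @cart_off_split k [::] p [::]; rewrite addn0 => ->. Qed.

Lemma cart_off_cons_neq_leaf k a (s : seq int) : cart_off k (a :: s) <> Leaf.
Proof. by rewrite /cart_off cart_auxS. Qed.

Lemma uniq_min_split (x : seq int) : x != [::] -> uniq x ->
  exists l m r, x = l ++ m :: r /\ {in l ++ r, forall y, (m < y)%R}.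
Proof.
case: x => [|a s] // _; have := @seqmin_le a s.
case/splitPr: (seqmin_mem a s) => l r min_le u; set m := seqmin a s in min_le u *.
have m_lr : m \notin l ++ r.
  by move: u; rewrite cat_uniq mem_cat negb_or /= => /and3P [_ /norP [-> _] /andP [-> _]].
exists l, m, r; split=> // y ylr; rewrite lt_neqAle; apply/andP; split.
  by apply: contraNneq m_lr => ->.
by apply: min_le; move: ylr; rewrite !mem_cat inE => /orP [->|->]; rewrite ?orbT.
Qed.

Lemma uniq_min_ind (P : seq int -> Prop) : P [::] ->
  (forall l m r, {in l ++ r, forall y, (m < y)%R} -> uniq (l ++ m :: r) ->
     P l -> P r -> P (l ++ m :: r)) ->
  forall x : seq int, uniq x -> P x.
Proof.
move=> P0 Psplit x; elim: {x}(size x).+1 {-2}x (ltnSn (size x)) => // n IH x ltxn ux.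
have [->|xn] := eqVneq x [::]; first exact: P0.
have [l [m [r [ex m_min]]]] := uniq_min_split xn ux.
subst x; move: (ux) ltxn; rewrite cat_uniq size_cat /= => /and3P [ul _ /andP [_ ur]] lt_n.
by apply: Psplit => //; apply: IH => //; lia.
Qed.

Lemma cart_off_mono (g : int -> int) (x : seq int) k : {mono g : a b / (a < b)%R} ->
  uniq x -> cart_off k (map g x) = cart_off k x.
Proof.
move=> g_mono ux; move: x ux k; apply: uniq_min_ind => // l m r m_min _ IHl IHr k.
rewrite map_cat /= !cart_off_split ?size_map ?IHl ?IHr // -map_cat.
by move=> _ /mapP [y yl ->]; rewrite g_mono m_min.
Qed.

Lemma tsize_cart_off (x : seq int) k : uniq x -> Defs.tsize (cart_off k x) = size x.
Proof.
move=> ux; move: x ux k; apply: uniq_min_ind => // l m r m_min _ IHl IHr k.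
by rewrite cart_off_split //= IHl IHr size_cat addnS.
Qed.

Lemma cart_root (x : seq int) A i B : uniq x -> cart x = Node A i B ->
  exists l m r, x = l ++ m :: r /\
    [/\ {in l ++ r, forall y, (m < y)%R}, A = cart l, i = (size l).+1 & B = cart_off i r].
Proof.
move=> ux; have [->|xn] := eqVneq x [::]; first by [].
have [l [m [r [-> m_min]]]] := uniq_min_split xn ux.
by rewrite cartE cart_off_split // => -[<- <- <-]; exists l, m, r.
Qed.

Lemma tau_cat (a b : seq int) u w : tau (a ++ u :: w :: b) (size a).+1 = a ++ w :: u :: b.
Proof.
have set_nth_cat n s v : set_nth 0%R (a ++ s) (size a + n) v = a ++ set_nth 0%R s n v.
  by elim: (a) => //= c a' ->.
rewrite /tau /= !nth_cat ltnn subnn ltnNge leqnSn subSnn /=.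
by rewrite -[size a]addn0 set_nth_cat addn0 -addn1 set_nth_cat.
Qed.

(** * Tree surgery *)

Fixpoint rm_rightmost (t : btree) : btree :=
  if t is Node a j b then (if b is Leaf then a else Node a j (rm_rightmost b)) else Leaf.

Fixpoint rm_leftmost (t : btree) : btree :=
  if t is Node a j b then (if a is Leaf then b else Node (rm_leftmost a) j b) else Leaf.

Fixpoint ins_left (d j : nat) (t : btree) : btree :=
  match d, t with
  | d'.+1, Node a q b => Node (ins_left d' j a) q b
  | _, _ => Node Leaf j t
  end.

Lemma ins_left_neq_leaf d j t : ins_left d j t <> Leaf.
Proof. by case: d t => [|d] [|a q b]. Qed.

Lemma ins_leftK d j : cancel (ins_left d j) rm_leftmost.
Proof.
elim: d => [|d IH] [|a q b] //=.
by move: (@ins_left_neq_leaf d j a); rewrite IH; case: (ins_left d j a).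
Qed.

Lemma ins_left_inj d d' j t : d <= lbl t -> d' <= lbl t ->
  ins_left d j t = ins_left d' j t -> d = d'.
Proof.
elim: d d' t => [|d IH] [|d'] [|a q b] //=.
- by move=> _ _ [] /esym /ins_left_neq_leaf.
- by move=> _ _ [] /ins_left_neq_leaf.
- by move=> hd hd' [] /(IH _ _ hd hd') ->.
Qed.

Lemma rm_rightmost_node a j b : b <> Leaf ->
  rm_rightmost (Node a j b) = Node a j (rm_rightmost b).
Proof. by case: b. Qed.

Lemma rm_rightmost_cart_off (x : seq int) k : uniq x ->
  rm_rightmost (cart_off k x) = cart_off k (take (size x).-1 x).
Proof.
move=> ux; move: x ux k; apply: uniq_min_ind => // l m r m_min _ _ IHr k.
rewrite cart_off_split //; case: r m_min IHr => [|q r] m_min IHr.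
  by rewrite size_cat addn1 take_size_cat.
rewrite rm_rightmost_node ?IHr; last exact: cart_off_cons_neq_leaf.
have -> : (size (l ++ m :: q :: r)).-1 = size l + (size r).+1 by rewrite size_cat /= addnS.
rewrite take_cat ltnNge leq_addr addKn /= cart_off_split //.
by move=> y; rewrite mem_cat => /orP [yl|/mem_take yr]; apply: m_min; rewrite mem_cat ?yl ?yr ?orbT.
Qed.

Lemma cart_off_cons (p : int) (r : seq int) k : uniq (p :: r) ->
  exists2 d, d <= lbl (cart_off k.+1 r) & cart_off k (p :: r) = ins_left d k.+1 (cart_off k.+1 r).
Proof.
case/andP=> + ur; move: r ur k; apply: uniq_min_ind => [|l m r m_min _ IHl _] k p_r.
  by exists 0; rewrite ?cart_off_single.
have [p_l p_m] : p \notin l /\ p != m by move: p_r; rewrite mem_cat inE !negb_or => /and3P [].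
case: (ltgtP p m) => [p_lt_m|m_lt_p|/eqP]; last by rewrite (negbTE p_m).
- exists 0 => //; have := @cart_off_split k [::] p (l ++ m :: r); rewrite addn0 => -> //.
  move=> y /=; rewrite mem_cat inE orbCA => /orP [/eqP -> //|].
  by rewrite -mem_cat => /m_min; apply: lt_trans.
- have [d hd e] := IHl k p_l; exists d.+1; rewrite cart_off_split //.
  rewrite -cat_cons cart_off_split /= ?e ?addnS ?addSn //.
  by move=> y; rewrite inE => /orP [/eqP -> //|/m_min].
Qed.

(** * Realizing insertions *)

Fixpoint labelled_from (k : nat) (t : btree) : Prop :=
  if t is Node a j b then [/\ labelled_from k a, j = (k + Defs.tsize a).+1 & labelled_from j b]
  else True.

Lemma labelled_cart_off (x : seq int) k : uniq x -> labelled_from k (cart_off k x).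
Proof.
move=> ux; move: x ux k; apply: uniq_min_ind => // l m r m_min u IHl IHr k.
move: u; rewrite cat_uniq => /and3P [ul _ /andP [_ ur]].
by rewrite cart_off_split //= tsize_cart_off.
Qed.

Lemma labelled_ins_left d k t : labelled_from k.+1 t -> labelled_from k (ins_left d k.+1 t).
Proof.
have tsize_ins e j u : Defs.tsize (ins_left e j u) = (Defs.tsize u).+1.
  by elim: e u => [|e IH] [|a q b] //=; rewrite IH.
elim: d k t => [|d IH] k [|a q b] //=; rewrite ?addn0 // => -[la -> lb].
by split=> //; [apply: IH | rewrite tsize_ins addnS].
Qed.

(* Each node gets its preorder rank, so it is smaller than all its descendants. *)
Fixpoint preorder_seq (t : btree) : seq int :=
  if t is Node a _ b then
    [seq (y + 1)%R | y <- preorder_seq a] ++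
      0%R :: [seq (y + (Defs.tsize a).+1%:Z)%R | y <- preorder_seq b]
  else [::].

Lemma size_preorder_seq t : size (preorder_seq t) = Defs.tsize t.
Proof. by elim: t => //= a IHa _ b IHb; rewrite size_cat /= !size_map IHa IHb addnS. Qed.

Lemma preorder_seq_range t y : y \in preorder_seq t -> (0 <= y < (Defs.tsize t)%:Z)%R.
Proof.
elim: t y => //= a IHa _ b IHb y; rewrite mem_cat inE.
by case/or3P => [/mapP [z /IHa + ->]|/eqP ->|/mapP [z /IHb + ->]]; lia.
Qed.

Lemma uniq_preorder_seq t : uniq (preorder_seq t).
Proof.
elim: t => //= a IHa _ b IHb; rewrite cat_uniq /= !map_inj_uniq ?IHa ?IHb ?andbT /=;
  try by move=> y z; lia.
apply/andP; split.
  apply/norP; split; first by apply/mapP => -[z /preorder_seq_range]; lia.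
  apply/hasPn => _ /mapP [y /preorder_seq_range hy ->].
  by apply/mapP => -[z /preorder_seq_range]; lia.
by apply/mapP => -[z /preorder_seq_range]; lia.
Qed.

Lemma cart_off_preorder_seq k t : labelled_from k t -> cart_off k (preorder_seq t) = t.
Proof.
elim: t k => //= a IHa j b IHb k [la -> lb].
rewrite cart_off_split ?size_map ?size_preorder_seq ?cart_off_mono ?uniq_preorder_seq ?IHa ?IHb //;
  try by move=> y z; apply/idP/idP; lia.
by move=> y; rewrite mem_cat => /orP [] /mapP [z /preorder_seq_range + ->]; lia.
Qed.

Lemma cart_off_cons_surj (r : seq int) k d : uniq r -> d <= lbl (cart_off k.+1 r) ->
  exists q0 r0, [/\ uniq (q0 :: r0), cart_off k (q0 :: r0) = ins_left d k.+1 (cart_off k.+1 r)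
                  & cart_off k.+1 r0 = cart_off k.+1 r].
Proof.
move=> ur hd; set t := ins_left d _ _.
have : labelled_from k t by apply/labelled_ins_left/labelled_cart_off.
move/cart_off_preorder_seq; move: (uniq_preorder_seq t).
case: (preorder_seq t) => [_ /esym /ins_left_neq_leaf //|q0 r0 us ct]; exists q0, r0; split=> //.
have [d' _ e] := cart_off_cons k us.
by rewrite -(ins_leftK d k.+1 (cart_off k.+1 r)) -/t -ct e ins_leftK.
Qed.

Lemma lt_mono_inj (f : int -> int) : {mono f : x y / (x < y)%R} -> injective f.
Proof. by move=> f_mono x y e; apply/eqP; case: ltgtP => //; rewrite -f_mono e ltxx. Qed.

Lemma exists_below (s : seq int) : exists m, {in s, forall y, (m < y)%R}.
Proof.
exists (seqmin 0 s - 1)%R => y ys.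
have h : (seqmin 0 s <= y)%R by apply: seqmin_le; rewrite inE ys orbT.
by rewrite ltrBlDr (le_lt_trans h) // ltrDl.
Qed.

Lemma uniq_cat_min (l r : seq int) m : {in l ++ r, forall y, (m < y)%R} -> uniq (l ++ r) ->
  uniq (l ++ m :: r).
Proof.
move=> m_min; have : m \notin l ++ r by apply/negP => /m_min; rewrite ltxx.
by rewrite !cat_uniq mem_cat /= negb_or => /andP [/negbTE -> ->] /and3P [-> -> ->].
Qed.

Lemma glue_at_pivot (u v : seq int) p q : uniq (rcons u p) -> uniq (q :: v) ->
  exists f g : int -> int, [/\ {mono f : x y / (x < y)%R}, {mono g : x y / (x < y)%R},
    f p = g q & uniq (map f (rcons u p) ++ map g v)].
Proof.
move=> uup /andP [q_v uv].
(* f is even everywhere, g is odd except at q: the images meet only at f p = g q. *)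
pose f x := (2 * x : int)%R.
pose g y := (if y < q then 2 * (y - q + p) + 1 else if q < y then 2 * (y - q + p) - 1 else 2 * p)%R.
have f_mono : {mono f : x y / (x < y)%R} by move=> x y; apply/idP/idP; rewrite /f; lia.
have g_mono : {mono g : x y / (x < y)%R}.
  by move=> x y; rewrite /g; case: (ltgtP x q) => ?; case: (ltgtP y q) => ?; apply/idP/idP; lia.
have fg : forall x y, f x = g y -> y = q by move=> x y; rewrite /f /g; case: (ltgtP y q) => //; lia.
exists f, g; split => //; first by rewrite /g ltxx.
rewrite cat_uniq !map_inj_uniq; try exact: lt_mono_inj.
apply/and3P; split=> //.
apply/hasPn => _ /mapP [y yv ->]; apply/mapP => -[x _ /esym/fg yq].
by move: q_v; rewrite -yq yv.
Qed.

(** * Exchanging the root with its left neighbour *)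

Lemma cart_tau_root_left (a r : seq int) p m :
  {in a ++ p :: r, forall y, (m < y)%R} -> uniq (rcons a p) ->
  cart (tau (a ++ p :: m :: r) (size a).+1) =
  Node (rm_rightmost (cart (rcons a p))) (size a).+1 (cart_off (size a).+1 (p :: r)).
Proof.
move=> m_min uap; rewrite tau_cat cartE cart_off_split // rm_rightmost_cart_off //.
by rewrite size_rcons -cats1 take_size_cat.
Qed.

Lemma ng_root_left_form A i B t : A <> Leaf -> ng (Node A i B) i.-1 t ->
  exists2 d, d <= lbl B & t = Node (rm_rightmost A) i.-1 (ins_left d i B).
Proof.
move=> nA [y [uy [cy ->]]].
have [l [m [r [ey [m_min eA ei eB]]]]] := cart_root uy cy.
case/lastP: l ey m_min eA ei => [|a p] ey m_min eA ei; first by rewrite eA in nA.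
rewrite size_rcons in ei; subst i.
have uap : uniq (rcons a p) by move: uy; rewrite ey cat_uniq => /andP [].
have upr : uniq (p :: r).
  move: uy; rewrite ey cat_rcons cat_uniq => /and3P [_ _] /=.
  by rewrite inE negb_or => /and3P [/andP [_ ->] _ ->].
have [d hd e] := cart_off_cons (size a).+1 upr.
rewrite cat_rcons in m_min; exists d; rewrite eB //.
by rewrite ey cat_rcons cart_tau_root_left // e eA.
Qed.

Lemma ng_root_left_ins x A i B d : uniq x -> cart x = Node A i B -> A <> Leaf -> d <= lbl B ->
  ng (Node A i B) i.-1 (Node (rm_rightmost A) i.-1 (ins_left d i B)).
Proof.
move=> ux cx nA hd.
have [l [m [r [ex [m_min eA ei eB]]]]] := cart_root ux cx.
case/lastP: l ex m_min eA ei => [|a q] ex m_min eA ei; first by rewrite eA in nA.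
rewrite size_rcons in ei; subst i.
have uaq : uniq (rcons a q) by move: ux; rewrite ex cat_uniq => /andP [].
have ur : uniq r by move: ux; rewrite ex cat_uniq => /and3P [_ _ /andP []].
subst B; have [q0 [r0 [us ct cr0]]] := cart_off_cons_surj ur hd.
have [f [g [f_mono g_mono fg ufg]]] := glue_at_pivot uaq us.
have [m' m'_min] := exists_below (map f (rcons a q) ++ map g r0).
exists (map f (rcons a q) ++ m' :: map g r0); split; first exact: uniq_cat_min.
split.
  have ur0 : uniq r0 by case/andP: us.
  by rewrite cartE cart_off_split // add0n size_map !cart_off_mono // size_rcons -cartE -eA cr0.
apply/esym; rewrite map_rcons cat_rcons -(size_map f a) cart_tau_root_left.
- by rewrite -map_rcons cartE cart_off_mono // -cartE -eA fg -map_cons cart_off_mono // size_map ct.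
- by rewrite -cat_rcons -map_rcons.
- by rewrite -map_rcons map_inj_uniq //; apply: lt_mono_inj.
Qed.

Lemma card_is_range (P : btree -> Prop) L (F : nat -> btree) :
  (forall d d', d <= L -> d' <= L -> F d = F d' -> d = d') ->
  (forall t, P t <-> exists2 d, d <= L & t = F d) -> card_is P L.+1.
Proof.
move=> F_inj PF; exists (List.map F (List.seq 0 L.+1)); split; [|split].
- apply: List.NoDup_map_NoDup_ForallPairs; last exact: List.seq_NoDup.
  by move=> d d' /List.in_seq hd /List.in_seq hd'; apply: F_inj; lia.
- move=> t; rewrite PF List.in_map_iff; split.
  + by case=> d [<- /List.in_seq hd]; exists d => //; lia.
  + by case=> d hd ->; exists d; split => //; apply/List.in_seq; lia.
- by rewrite List.length_map List.length_seq.
Qed.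

Lemma card_is_involution (P Q : btree -> Prop) (f : btree -> btree) k :
  (forall t, P t -> Q (f t) /\ f (f t) = t) -> (forall t, Q t -> P (f t) /\ f (f t) = t) ->
  card_is Q k -> card_is P k.
Proof.
move=> PQ QP [l [l_uniq [l_Q <-]]]; exists (List.map f l); split; [|split].
- apply: List.NoDup_map_NoDup_ForallPairs => // t t' /l_Q /QP [_ ft] /l_Q /QP [_ ft'] e.
  by rewrite -ft -ft' e.
- move=> t; rewrite List.in_map_iff; split; first by case=> t' [<- /l_Q /QP []].
  by case/PQ => /l_Q Qft ft; exists (f t).
- by rewrite List.length_map.
Qed.

Lemma card_ng_root_left (x : seq int) A i B : uniq x -> cart x = Node A i B -> A <> Leaf ->
  card_is (ng (Node A i B) i.-1) (lbl B).+1.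
Proof.
move=> ux cx nA; apply: (card_is_range (F := fun d => Node (rm_rightmost A) i.-1 (ins_left d i B))).
  by move=> d d' hd hd' [] /(ins_left_inj hd hd').
move=> t; split; first exact: ng_root_left_form.
by case=> d hd ->; apply: ng_root_left_ins ux cx nA hd.
Qed.

(** * Mirror symmetry *)

Fixpoint mirror (N : nat) (t : btree) : btree :=
  if t is Node a j b then Node (mirror N b) (N - j) (mirror N a) else Leaf.

Lemma lbl_mirror N t : lbl (mirror N t) = lbr t.
Proof. by elim: t => //= a _ j b ->. Qed.

Lemma cart_off_rev (x : seq int) k k' : uniq x ->
  cart_off k' (rev x) = mirror (k + k' + size x).+1 (cart_off k x).
Proof.
move=> ux; move: x ux k k'; apply: uniq_min_ind => // l m r m_min _ IHl IHr k k'.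
rewrite rev_cat rev_cons cat_rcons !cart_off_split //; last first.
  by move=> y; rewrite mem_cat !mem_rev orbC -mem_cat => /m_min.
rewrite size_rev (IHl k) (IHr (k + size l).+1) size_cat /=.
by congr Node; [congr mirror | | congr mirror]; lia.
Qed.

Lemma cart_rev (x : seq int) : uniq x -> cart (rev x) = mirror (size x).+1 (cart x).
Proof. exact: cart_off_rev. Qed.

Lemma mirror_cartK (x : seq int) : uniq x ->
  mirror (size x).+1 (mirror (size x).+1 (cart x)) = cart x.
Proof.
move=> ux; rewrite -cart_rev // -[in RHS](revK x) (@cart_rev (rev x)) ?rev_uniq //.
by rewrite size_rev.
Qed.

Lemma split_pair_at (x : seq int) i : 0 < i < size x ->
  exists a u w b, x = a ++ u :: w :: b /\ i = (size a).+1.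
Proof.
case: i => // i /= i_lt; exists (take i x), (nth 0%R x i), (nth 0%R x i.+1), (drop i.+2 x).
by rewrite size_takel ?(ltnW (ltnW i_lt)) // -!drop_nth ?cat_take_drop // ltnW.
Qed.

Lemma ng_mirror (x : seq int) i t : uniq x -> 0 < i < size x ->
  ng (cart (rev x)) (size x - i) t ->
  ng (cart x) i (mirror (size x).+1 t) /\ mirror (size x).+1 (mirror (size x).+1 t) = t.
Proof.
move=> ux hi [y [uy [cy ->]]].
have sy : size y = size x.
  by rewrite -(tsize_cart_off 0 uy) -cartE cy cartE tsize_cart_off ?size_rev ?rev_uniq.
have [a [u [w [b [ey ej]]]]] : exists a u w b, y = a ++ u :: w :: b /\ size x - i = (size a).+1.
  by apply: split_pair_at; rewrite sy; lia.
subst y; rewrite ej tau_cat.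
have uv : uniq (a ++ w :: u :: b).
  have swap_perm : perm_eq (a ++ w :: u :: b) (a ++ u :: w :: b).
    by rewrite perm_cat2l; apply/permP => P /=; rewrite addnCA.
  by rewrite (perm_uniq swap_perm).
have sv : size (a ++ w :: u :: b) = size x by rewrite -sy !size_cat.
split; last by rewrite -sv mirror_cartK.
exists (rev (a ++ u :: w :: b)); split; first by rewrite rev_uniq.
split; first by rewrite cart_rev // cy sy cart_rev // mirror_cartK.
rewrite -sv -cart_rev // !rev_cat !rev_cons -!cats1 -!catA /=.
have -> : i = (size (rev b)).+1 by move: sv; rewrite size_rev size_cat /=; lia.
by rewrite tau_cat.
Qed.

Lemma card_ng_root_right (x : seq int) A i B : uniq x -> cart x = Node A i B -> B <> Leaf ->
  card_is (ng (Node A i B) i) (lbr A).+1.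
Proof.
move=> ux cx nB; have urx : uniq (rev x) by rewrite rev_uniq.
have hi : 0 < i < size x.
  have [l [m [r [ex [_ _ ei eB]]]]] := cart_root ux cx.
  case: r ex eB => [|q r] ex eB; first by rewrite eB in nB.
  by rewrite ei ex size_cat /=; lia.
have crx : cart (rev x) = Node (mirror (size x).+1 B) (size x - i).+1 (mirror (size x).+1 A).
  by rewrite cart_rev // cx /= subSn //; case/andP: hi => _ /ltnW.
have nB' : mirror (size x).+1 B <> Leaf by case: (B) nB.
have := card_ng_root_left urx crx nB'; rewrite lbl_mirror succnK -crx -cx.
apply: (card_is_involution (f := mirror (size x).+1)) => t; last exact: ng_mirror.
have hi' : 0 < size x - i < size (rev x) by rewrite size_rev; lia.
move=> Pt; have Pt' : ng (cart (rev (rev x))) (size (rev x) - (size x - i)) t.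
  by rewrite revK size_rev subKn //; case/andP: hi => _ /ltnW.
by have := ng_mirror urx hi' Pt'; rewrite size_rev.
Qed.

Theorem lemma8 (T A B : btree) (i : nat) :
  (exists x : seq int, uniq x /\ cart x = T) ->
  T = Node A i B ->
  (A <> Leaf -> card_is (ng T i.-1) (lbl B).+1) /\
  (B <> Leaf -> card_is (ng T i) (lbr A).+1).
Proof.
case=> x [ux cx] eT; rewrite eT in cx *.
by split; [exact: card_ng_root_left ux cx | exact: card_ng_root_right ux cx].
Qed.
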